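(* There is an algorithm which, given an order-3 symmetric tensor $T\in(\mathbb{C}^n)^{\otimes 3}$ and a matrix $V\in M_{n,r}(\mathbb{C})$ with $r\le n$, outputs $s_1,\dots,s_r$ with $s_i=\mathrm{Tr}(S_i)$ for all $i\in[r]$, where $S_1,\dots,S_r$ are the slices of $S=(V\otimes V\otimes V).T\in(\mathbb{C}^r)^{\otimes 3}$, using $O(n^3)$ arithmetic operations.
   Context: The $k$-th slice of a tensor $T=(T_{ijk})$ is the matrix $T_k=(T_{ijk})_{i,j}$. For $A\in\mathbb{C}^{n\times r}$, $(A\otimes A\otimes A).T\in(\mathbb{C}^r)^{\otimes3}$ is defined by $\big((A\otimes A\otimes A).T\big)_{i_1i_2i_3}=\sum_{j_1,j_2,j_3=1}^n A_{j_1i_1}A_{j_2i_2}A_{j_3i_3}T_{j_1j_2j_3}$. Arithmetic operations are exact operations over $\mathbb{C}$. *)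

From HB Require Import structures.
From mathcomp Require Import all_boot all_order all_algebra.
From mathcomp Require Import complex.
From mathcomp Require Import Rstruct.
Set Implicit Arguments. Unset Strict Implicit. Unset Printing Implicit Defensive.
Import Order.TTheory GRing.Theory Num.Theory.
Local Open Scope ring_scope.

Definition C : fieldType := (Rdefinitions.R)[i].

(** ---- Model of computation: straight-line arithmetic programs ----
    A program acts on a growing list of registers, initially holding the
    inputs.  Each instruction appends one new register, computed by one
    exact arithmetic operation over the field on earlier registers (or a
    constant).  Reading inputs / outputs is free. *)
Inductive instr (F : Type) : Type :=
  | IConst of F
  | IAdd of nat & nat
  | ISub of nat & nat
  | IMul of nat & nat
  | IDiv of nat & nat.

Record slp (F : Type) := SLP { slp_instrs : seq (instr F); slp_outs : seq nat }.

Section SLPEval.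
Variable F : fieldType.

Definition exec_instr (env : seq F) (ins : instr F) : F :=
  match ins with
  | IConst c => c
  | IAdd a b => nth 0 env a + nth 0 env b
  | ISub a b => nth 0 env a - nth 0 env b
  | IMul a b => nth 0 env a * nth 0 env b
  | IDiv a b => nth 0 env a / nth 0 env b
  end.

Definition run_instrs (inp : seq F) (p : seq (instr F)) : seq F :=
  foldl (fun env ins => rcons env (exec_instr env ins)) inp p.

Definition slp_eval (P : slp F) (inp : seq F) : seq F :=
  let env := run_instrs inp (slp_instrs P) in
  [seq nth 0 env o | o <- slp_outs P].

Definition slp_cost (P : slp F) : nat := size (slp_instrs P).
End SLPEval.

Definition tensor3 (F : Type) (n : nat) := 'I_n -> 'I_n -> 'I_n -> F.

Definition symmetric_tensor (F : Type) (n : nat) (T : tensor3 F n) : Prop :=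
  forall i j k, T i j k = T j i k /\ T i j k = T i k j.

Definition tensor_act (F : fieldType) (n r : nat) (A : 'M[F]_(n, r))
  (T : tensor3 F n) : tensor3 F r :=
  fun i1 i2 i3 => \sum_(j1 < n) \sum_(j2 < n) \sum_(j3 < n)
    A j1 i1 * A j2 i2 * A j3 i3 * T j1 j2 j3.

Definition slice (F : Type) (r : nat) (S : tensor3 F r) (k : 'I_r) : 'M[F]_r :=
  \matrix_(i, j) S i j k.

(** Input encoding: entries of T in lexicographic order of (i,j,k),
    followed by entries of V in lexicographic order of (a,b). *)
Definition encode_input (F : Type) (n r : nat) (T : tensor3 F n)
  (V : 'M[F]_(n, r)) : seq F :=
  [seq T t.1.1 t.1.2 t.2 | t <- enum {: 'I_n * 'I_n * 'I_n}]
  ++ [seq V ab.1 ab.2 | ab <- enum {: 'I_n * 'I_r}].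

(* Tr(S_k) = sum_c S_{cck} = sum_{j3} V_{j3 k} U_{j3}, where
   U_{j3} = sum_{j1,j2} W_{j1 j2} T_{j1 j2 j3} and W = V V^T.  Every entry of
   W, U and of the output is a single dot product, so the three stages cost
   O(n^2 r), O(n^3) and O(n r) operations. *)

From mathcomp Require Import all_boot all_order all_algebra.
From mathcomp Require Import zify ring.
Import GRing.Theory.
Set Implicit Arguments. Unset Strict Implicit. Unset Printing Implicit Defensive.

Section StraightLinePrograms.
Variable F : fieldType.
Implicit Types (env : seq F) (c d : seq (instr F)).

Lemma run_instrs_cons env i c :
  run_instrs env (i :: c) = run_instrs (rcons env (exec_instr env i)) c.
Proof. by []. Qed.

Lemma run_instrs_cat env c d :
  run_instrs env (c ++ d) = run_instrs (run_instrs env c) d.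
Proof. exact: foldl_cat. Qed.

Lemma size_run_instrs env c : size (run_instrs env c) = size env + size c.
Proof.
elim: c env => [|i c IHc] env; first by rewrite addn0.
by rewrite run_instrs_cons IHc size_rcons addSnnS.
Qed.

Lemma nth_run_instrs env c j : j < size env ->
  nth 0%R (run_instrs env c) j = nth 0%R env j.
Proof.
elim: c env => [|i c IHc] env // lt_j_env.
by rewrite run_instrs_cons IHc ?nth_rcons ?lt_j_env // size_rcons ltnW.
Qed.

(* Register [N] holds the running sum; each pair appends its product and
   then the new sum, which becomes the accumulator of the next step. *)
Fixpoint dot_steps (N : nat) (ps : seq (nat * nat)) : seq (instr F) :=
  if ps is p :: ps' then IMul F p.1 p.2 :: IAdd F N N.+1 :: dot_steps N.+2 ps'
  else [::].

Definition dot_instrs N ps := IConst (0%R : F) :: dot_steps N ps.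

Definition dot_value env (ps : seq (nat * nat)) :=
  (\sum_(p <- ps) nth 0 env p.1 * nth 0 env p.2)%R.

Definition bounded_pairs N (ps : seq (nat * nat)) :=
  forall p, p \in ps -> p.1 < N /\ p.2 < N.

Lemma size_dot_instrs N ps : size (dot_instrs N ps) = (2 * size ps).+1.
Proof. congr _.+1; elim: ps N => [|p ps IHps] N //=; rewrite IHps; lia. Qed.

Lemma eq_dot_value env env' N ps : bounded_pairs N ps ->
  (forall i, i < N -> nth 0%R env i = nth 0%R env' i) ->
  dot_value env ps = dot_value env' ps.
Proof.
move=> ps_N eq_env; apply: eq_big_seq => p /ps_N[p1_N p2_N].
by rewrite !eq_env.
Qed.

Lemma nth_dot_steps env N ps : size env = N.+1 -> bounded_pairs N ps ->
  nth 0%R (run_instrs env (dot_steps N ps)) (N + 2 * size ps)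
  = (nth 0 env N + dot_value env ps)%R.
Proof.
elim: ps env N => [|p ps IHps] env N size_env ps_N.
  by rewrite /dot_value big_nil addn0 addr0.
have [p1_N p2_N] := ps_N p (mem_head _ _).
have ps'_N : bounded_pairs N ps by move=> q q_ps; apply: ps_N; rewrite inE q_ps orbT.
have -> : N + 2 * size (p :: ps) = N.+2 + 2 * size ps by rewrite /=; lia.
rewrite [dot_steps _ _]/= !run_instrs_cons.
set env2 := rcons (rcons env _) _.
have env2_low i : i < N.+1 -> nth 0%R env2 i = nth 0%R env i.
  by move=> lt_iN; rewrite !nth_rcons !size_rcons size_env lt_iN ltnW ?ltnS.
rewrite IHps ?size_rcons ?size_env //; last by move=> q /ps'_N[q1_N q2_N]; lia.
have -> : nth 0%R env2 N.+2 = (nth 0 env N + nth 0 env p.1 * nth 0 env p.2)%R.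
  rewrite nth_rcons size_rcons size_env ltnn eqxx /=.
  by rewrite !nth_rcons size_env ltnSn ltnn eqxx.
rewrite /dot_value big_cons addrA; congr (_ + _)%R.
apply: (eq_dot_value ps'_N) => i lt_iN; apply: env2_low; lia.
Qed.

Lemma nth_dot_instrs env N ps : size env = N -> bounded_pairs N ps ->
  nth 0%R (run_instrs env (dot_instrs N ps)) (N + 2 * size ps) = dot_value env ps.
Proof.
move=> size_env ps_N.
rewrite run_instrs_cons nth_dot_steps ?size_rcons ?size_env //=.
rewrite nth_rcons size_env ltnn eqxx add0r.
by apply: (eq_dot_value ps_N) => i lt_iN; rewrite nth_rcons size_env lt_iN.
Qed.

Definition dot_out base L i := base + i * (2 * L).+1 + 2 * L.

Lemma dot_out_lt base L m i : i < m -> dot_out base L i < base + m * (2 * L).+1.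
Proof. by rewrite /dot_out; nia. Qed.

Definition dot_stage base m L (ps : nat -> seq (nat * nat)) : seq (instr F) :=
  flatten [seq dot_instrs (base + i * (2 * L).+1) (ps i) | i <- iota 0 m].

Lemma dot_stageS base m L ps : dot_stage base m.+1 L ps
  = dot_stage base m L ps ++ dot_instrs (base + m * (2 * L).+1) (ps m).
Proof. by rewrite /dot_stage -[m.+1]addn1 iotaD map_cat flatten_cat /= cats0. Qed.

Lemma size_dot_stage base m L ps : (forall i, size (ps i) = L) ->
  size (dot_stage base m L ps) = m * (2 * L).+1.
Proof.
move=> size_ps; elim: m => [|m IHm] //.
by rewrite dot_stageS size_cat IHm size_dot_instrs size_ps mulSn addnC.
Qed.

Lemma nth_dot_stage env base m L ps :
  size env = base -> (forall i, size (ps i) = L) ->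
  (forall i, i < m -> bounded_pairs base (ps i)) ->
  forall i, i < m ->
  nth 0%R (run_instrs env (dot_stage base m L ps)) (dot_out base L i)
  = dot_value env (ps i).
Proof.
move=> size_env size_ps; elim: m => [|m IHm] ps_base i // lt_im.
have size_run : size (run_instrs env (dot_stage base m L ps)) = base + m * (2 * L).+1.
  by rewrite size_run_instrs size_dot_stage // size_env.
rewrite dot_stageS run_instrs_cat.
have [lt_i_m|->] : i < m \/ i = m by lia.
  rewrite nth_run_instrs; last by rewrite size_run dot_out_lt.
  by apply: IHm => // j lt_jm; apply: ps_base; lia.
have -> : dot_out base L m = base + m * (2 * L).+1 + 2 * size (ps m).
  by rewrite size_ps.
have ps_m := ps_base m (ltnSn m).
rewrite nth_dot_instrs //; last by move=> p /ps_m[p1_base p2_base]; lia.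
by apply: (eq_dot_value ps_m) => j lt_j; rewrite nth_run_instrs ?size_env.
Qed.

End StraightLinePrograms.

Lemma nth_allpairs_pair (A B : Type) (s : seq A) (t : seq B) x0 y0 i j :
  i < size s -> j < size t ->
  nth (x0, y0) [seq (x, y) | x <- s, y <- t] (i * size t + j)
  = (nth x0 s i, nth y0 t j).
Proof.
move=> + lt_jt; elim: s i => [|x s IHs] [|i] //= lt_is.
  by rewrite nth_cat size_map lt_jt (nth_map y0).
rewrite nth_cat size_map mulSn -addnA ltnNge leq_addr /= addKn.
exact: IHs.
Qed.

Lemma nth_enum_prod_ord (T1 : finType) p (x0 : T1) (y0 : 'I_p) i (j : 'I_p) :
  i < #|T1| -> nth (x0, y0) (enum {: T1 * 'I_p}) (i * p + j) = (nth x0 (enum T1) i, j).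
Proof.
move=> lt_i_T1; rewrite [enum _]enumT unlock /= /prod_enum.
by rewrite -[in i * p](size_enum_ord p) nth_allpairs_pair ?nth_ord_enum -?cardE ?card_ord.
Qed.

Section InputEncoding.
Variables (F : fieldType) (n r : nat) (T : tensor3 F n) (V : 'M[F]_(n, r)).

Lemma size_encode_input : size (encode_input T V) = n * n * n + n * r.
Proof.
by rewrite size_cat !size_map -?enumT -!cardT !card_prod !card_ord.
Qed.

Lemma nth_encode_input_T (i j k : 'I_n) :
  nth 0%R (encode_input T V) ((i * n + j) * n + k) = T i j k.
Proof.
have := ltn_ord i; have := ltn_ord j; have := ltn_ord k => lt_kn lt_jn lt_in.
have size_T : size [seq T t.1.1 t.1.2 t.2 | t <- enum {: 'I_n * 'I_n * 'I_n}] = n * n * n.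
  by rewrite size_map -?enumT -cardT !card_prod !card_ord.
have lt_ij : i * n + j < #|{: 'I_n * 'I_n}| by rewrite card_prod !card_ord; nia.
rewrite nth_cat size_T ifT; last by nia.
rewrite (nth_map (i, j, k)); last by rewrite -?enumT -cardT !card_prod !card_ord; nia.
rewrite nth_enum_prod_ord // nth_enum_prod_ord ?card_ord //.
by rewrite nth_ord_enum.
Qed.

Lemma nth_encode_input_V (a : 'I_n) (b : 'I_r) :
  nth 0%R (encode_input T V) (n * n * n + a * r + b) = V a b.
Proof.
have := ltn_ord a; have := ltn_ord b => lt_br lt_an.
rewrite nth_cat size_map -?enumT -cardT !card_prod !card_ord ifN; last by lia.
rewrite -addnA addKn (nth_map (a, b)); last by rewrite -?enumT -cardT !card_prod !card_ord; nia.
by rewrite nth_enum_prod_ord ?card_ord // nth_ord_enum.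
Qed.

End InputEncoding.

Lemma mxtrace_slice_tensor_act (F : fieldType) n r (V : 'M[F]_(n, r))
    (T : tensor3 F n) (k : 'I_r) :
  (\tr (slice (tensor_act V T) k))%R
  = (\sum_(j3 < n) V j3 k *
       \sum_(j1 < n) \sum_(j2 < n) (V *m V^T) j1 j2 * T j1 j2 j3)%R.
Proof.
rewrite /mxtrace /tensor_act.
transitivity (\sum_(j1 < n) \sum_(j2 < n) \sum_(j3 < n) \sum_(c < r)
                V j1 c * V j2 c * V j3 k * T j1 j2 j3)%R.
  under eq_bigr => c _ do rewrite mxE.
  rewrite exchange_big; apply: eq_bigr => j1 _.
  rewrite exchange_big; apply: eq_bigr => j2 _.
  by rewrite exchange_big.
under [RHS]eq_bigr => j3 _ do rewrite big_distrr.
rewrite [RHS]exchange_big; apply: eq_bigr => j1 _.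
under [RHS]eq_bigr => j3 _ do rewrite big_distrr.
rewrite [RHS]exchange_big; apply: eq_bigr => j2 _; apply: eq_bigr => j3 _.
rewrite mxE big_distrl big_distrr; apply: eq_bigr => c _.
by rewrite mxE /=; ring.
Qed.

Section TraceSlicesProgram.
Variables (n r : nat).

Definition reg_T i j k := (i * n + j) * n + k.
Definition reg_V a b := n * n * n + a * r + b.

Definition gram_base := n * n * n + n * r.
Definition contract_base := gram_base + n * n * (2 * r).+1.
Definition trace_base := contract_base + n * (2 * (n * n)).+1.

Definition reg_W i j := dot_out gram_base r (i * n + j).
Definition reg_U k := dot_out contract_base (n * n) k.

Definition gram_pairs ij :=
  [seq (reg_V (ij %/ n) b, reg_V (ij %% n) b) | b : 'I_r <- enum 'I_r].
Definition contract_pairs k :=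
  [seq (reg_W i j, reg_T i j k) | i : 'I_n <- enum 'I_n, j : 'I_n <- enum 'I_n].
Definition trace_pairs b := [seq (reg_V j b, reg_U j) | j : 'I_n <- enum 'I_n].

Definition trace_slices_slp (F : fieldType) : slp F :=
  SLP (dot_stage F gram_base (n * n) r gram_pairs
       ++ dot_stage F contract_base n (n * n) contract_pairs
       ++ dot_stage F trace_base r n trace_pairs)
      [seq dot_out trace_base n b | b : 'I_r <- enum 'I_r].

Lemma size_gram_pairs ij : size (gram_pairs ij) = r.
Proof. by rewrite size_map size_enum_ord. Qed.

Lemma size_contract_pairs k : size (contract_pairs k) = n * n.
Proof. by rewrite size_allpairs size_enum_ord. Qed.

Lemma size_trace_pairs b : size (trace_pairs b) = n.
Proof. by rewrite size_map size_enum_ord. Qed.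

Lemma trace_slices_slp_cost (F : fieldType) :
  r <= n -> slp_cost (trace_slices_slp F) <= 9 * n ^ 3.
Proof.
move=> le_rn; rewrite /slp_cost /= !size_cat.
rewrite (size_dot_stage _ _ _ size_gram_pairs) (size_dot_stage _ _ _ size_contract_pairs).
rewrite (size_dot_stage _ _ _ size_trace_pairs).
case: n le_rn => [|m] le_rm; last by nia.
by rewrite leqn0 in le_rm; rewrite (eqP le_rm).
Qed.

End TraceSlicesProgram.

Section TraceSlicesCorrect.
Variables (F : fieldType) (n r : nat) (T : tensor3 F n) (V : 'M[F]_(n, r)).

Let env0 := encode_input T V.
Let env1 := run_instrs env0 (dot_stage F (gram_base n r) (n * n) r (gram_pairs n r)).
Let env2 := run_instrs env1
  (dot_stage F (contract_base n r) n (n * n) (contract_pairs n r)).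

Lemma lt_reg_V (a : 'I_n) (b : 'I_r) : reg_V n r a b < gram_base n r.
Proof. have := ltn_ord a; have := ltn_ord b; rewrite /reg_V /gram_base; nia. Qed.

Lemma lt_reg_T (i j k : 'I_n) : reg_T n i j k < gram_base n r.
Proof.
have := ltn_ord i; have := ltn_ord j; have := ltn_ord k.
rewrite /reg_T /gram_base; nia.
Qed.

Lemma size_env1 : size env1 = contract_base n r.
Proof.
by rewrite size_run_instrs size_encode_input (size_dot_stage _ _ _ (size_gram_pairs n r)).
Qed.

Lemma size_env2 : size env2 = trace_base n r.
Proof.
by rewrite size_run_instrs size_env1 (size_dot_stage _ _ _ (size_contract_pairs n r)).
Qed.

Lemma nth_env2_input j : j < gram_base n r -> nth 0%R env2 j = nth 0%R env0 j.
Proof.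
move=> lt_j; rewrite !nth_run_instrs // ?size_encode_input // size_env1.
exact: leq_trans lt_j (leq_addr _ _).
Qed.

Lemma nth_env1_W (i j : 'I_n) : nth 0%R env1 (reg_W n r i j) = ((V *m V^T) i j)%R.
Proof.
have := ltn_ord i; have := ltn_ord j => lt_jn lt_in.
have gram_bounded ij : ij < n * n -> bounded_pairs (gram_base n r) (gram_pairs n r ij).
  move=> lt_ij p /mapP[b _ ->].
  have lt_q : ij %/ n < n by rewrite ltn_divLR; lia.
  have lt_m : ij %% n < n by rewrite ltn_pmod; lia.
  by split; apply: (lt_reg_V (Ordinal _)).
rewrite (nth_dot_stage (size_encode_input T V) (size_gram_pairs n r) gram_bounded);
  last by nia.
rewrite /dot_value /gram_pairs big_map mxE big_enum /=.
rewrite divnMDl ?modnMDl ?divn_small ?modn_small ?addn0 //; last by lia.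
by apply: eq_bigr => b _; rewrite !nth_encode_input_V mxE.
Qed.

Lemma nth_env2_U (k : 'I_n) : nth 0%R env2 (reg_U n r k)
  = (\sum_(i < n) \sum_(j < n) (V *m V^T) i j * T i j k)%R.
Proof.
have contract_bounded m : m < n ->
    bounded_pairs (contract_base n r) (contract_pairs n r m).
  move=> lt_mn p /allpairsP[[i j] [_ _ ->]] /=; split.
    by apply: dot_out_lt; have := ltn_ord i; have := ltn_ord j; nia.
  exact: leq_trans (lt_reg_T i j (Ordinal lt_mn)) (leq_addr _ _).
rewrite (nth_dot_stage size_env1 (size_contract_pairs n r) contract_bounded) //.
rewrite /dot_value /contract_pairs big_allpairs_dep big_enum /=.
apply: eq_bigr => i _; rewrite big_enum /=; apply: eq_bigr => j _.
rewrite nth_env1_W /env1 nth_run_instrs ?size_encode_input ?lt_reg_T //.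
by rewrite /reg_T nth_encode_input_T.
Qed.

Lemma nth_trace_stage (b : 'I_r) :
  nth 0%R (run_instrs env2 (dot_stage F (trace_base n r) r n (trace_pairs n r)))
    (dot_out (trace_base n r) n b)
  = (\tr (slice (tensor_act V T) b))%R.
Proof.
have trace_bounded m : m < r -> bounded_pairs (trace_base n r) (trace_pairs n r m).
  move=> lt_mr p /mapP[j _ ->] /=; split.
    apply: leq_trans (lt_reg_V j (Ordinal lt_mr)) _.
    by rewrite /trace_base /contract_base -addnA leq_addr.
  exact: dot_out_lt.
rewrite (nth_dot_stage size_env2 (size_trace_pairs n r) trace_bounded) //.
rewrite mxtrace_slice_tensor_act /dot_value /trace_pairs big_map big_enum /=.
apply: eq_bigr => j _.
by rewrite nth_env2_U nth_env2_input ?lt_reg_V // /env0 nth_encode_input_V.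
Qed.

Lemma trace_slices_slp_correct :
  slp_eval (trace_slices_slp n r F) (encode_input T V)
  = [seq (\tr (slice (tensor_act V T) k))%R | k <- enum 'I_r].
Proof.
rewrite /slp_eval /= !run_instrs_cat -/env0 -/env1 -/env2 -map_comp.
by apply: eq_map => b; exact: nth_trace_stage.
Qed.

End TraceSlicesCorrect.

Local Open Scope ring_scope.

Theorem theorem3p3 :
  exists (c : nat) (Alg : nat -> nat -> slp C),
    forall n r : nat, (r <= n)%N ->
      (slp_cost (Alg n r) <= c * n ^ 3)%N /\
      forall (T : tensor3 C n) (V : 'M[C]_(n, r)),
        symmetric_tensor T ->
        slp_eval (Alg n r) (encode_input T V)
        = [seq \tr (slice (tensor_act V T) k) | k <- enum 'I_r].
Proof.
exists 9%N, (fun n r => trace_slices_slp n r C) => n r le_rn.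
split; first exact: trace_slices_slp_cost.
by move=> T V _; exact: trace_slices_slp_correct.
Qed.
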